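(* Let $S^1\times S^2=\{(\theta,x)\in S^1\times D^3:|x|=1\}=\partial(S^1\times D^3)$, where $D^3$ is the closed unit ball, and let $i:S^1\times S^2\to S^1\times D^3$ be the inclusion. Then there exist contact forms $\lambda_A$ and $\lambda_B$ on $S^1\times S^2$ with $d\lambda_A=i^*\omega_A$ and $d\lambda_B=i^*\omega_B$.
   Context: Coordinates: $\theta\in\mathbb{R}/2\pi\mathbb{Z}$, $x=(x_1,x_2,x_3)\in D^3$. $\omega_A=x_1(d\theta\, dx_1+dx_2\, dx_3)+x_2(d\theta\, dx_2+dx_3\, dx_1)-2x_3(d\theta\, dx_3+dx_1\, dx_2)$ on $S^1\times D^3$. $\omega_B$ is the 2-form on the mapping torus $([0,2\pi]\times D^3)/\sim$ (diffeomorphic to $S^1\times D^3$, with boundary $S^1\times S^2$) obtained from the same expression $x_1(d\theta\, dx_1+dx_2\, dx_3)+x_2(d\theta\, dx_2+dx_3\, dx_1)-2x_3(d\theta\, dx_3+dx_1\, dx_2)$ on $[0,2\pi]\times D^3$ by gluing $\{2\pi\}\times D^3$ to $\{0\}\times D^3$ via $\phi(2\pi,x_1,x_2,x_3)=(0,x_1,-x_2,-x_3)$, which satisfies $\phi^*\omega=\omega$; for $\omega_B$, $S^1\times S^2$ denotes the boundary of this mapping torus. *)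

From HB Require Import structures.
From mathcomp Require Import all_boot all_order all_algebra.
From mathcomp Require Import all_classical all_reals all_analysis.
Set Implicit Arguments. Unset Strict Implicit. Unset Printing Implicit Defensive.
Import Order.TTheory GRing.Theory Num.Theory.
Import numFieldNormedType.Exports.
Local Open Scope ring_scope.

(* Points / tangent vectors of the universal cover R x R^3 of S^1 x R^3 are
   row vectors p : 'rV[R]_4 with coordinates (theta, x1, x2, x3) =
   (p 0 i0, p 0 i1, p 0 i2, p 0 i3). *)
Definition i0 : 'I_4 := @Ordinal 4 0 isT.
Definition i1 : 'I_4 := @Ordinal 4 1 isT.
Definition i2 : 'I_4 := @Ordinal 4 2 isT.
Definition i3 : 'I_4 := @Ordinal 4 3 isT.

Section Geometry.
Variable R : realType.

Definition cr (p : 'rV[R]_4) (i : 'I_4) : R := p ord0 i.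

Definition partial (i : 'I_4) (f : 'rV[R]_4 -> R) (p : 'rV[R]_4) : R :=
  derive f p (delta_mx 0 i).

Fixpoint Ck (k : nat) (f : 'rV[R]_4 -> R) : Prop :=
  match k with
  | 0 => continuous f
  | k'.+1 => (forall p, differentiable f p) /\ (forall i, Ck k' (partial i f))
  end.
Definition smooth (f : 'rV[R]_4 -> R) : Prop := forall k, Ck k f.

(* A 1-form  a_0 dtheta + a_1 dx1 + a_2 dx2 + a_3 dx3  given by its coefficients *)
Definition oneform := 'I_4 -> 'rV[R]_4 -> R.
Definition smooth_form (a : oneform) : Prop := forall i, smooth (a i).

Definition ev1 (a : oneform) (p u : 'rV[R]_4) : R :=
  \sum_(i < 4) a i p * cr u i.

(* value of the exterior derivative da at p on (u, v):
   da = sum_{i<j} (d_i a_j - d_j a_i) dx_i /\ dx_j *)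
Definition dform (a : oneform) (p u v : 'rV[R]_4) : R :=
  \sum_(i < 4) \sum_(j < 4) (partial i (a j) p - partial j (a i) p) * cr u i * cr v j.

Definition wedge_ad (a : oneform) (p u v w : 'rV[R]_4) : R :=
  ev1 a p u * dform a p v w - ev1 a p v * dform a p u w + ev1 a p w * dform a p u v.

(* omega = x1(dth dx1 + dx2 dx3) + x2(dth dx2 + dx3 dx1) - 2 x3(dth dx3 + dx1 dx2),
   evaluated at p on (u, v)  (dx_i /\ dx_j (u,v) = u_i v_j - u_j v_i) *)
Definition omega (p u v : 'rV[R]_4) : R :=
  let w i j := cr u i * cr v j - cr u j * cr v i in
    cr p i1 * (w i0 i1 + w i2 i3)
  + cr p i2 * (w i0 i2 + w i3 i1)
  - 2 * cr p i3 * (w i0 i3 + w i1 i2).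

Definition on_bdry (p : 'rV[R]_4) : Prop :=
  cr p i1 ^+ 2 + cr p i2 ^+ 2 + cr p i3 ^+ 2 = 1.

Definition tangent (p v : 'rV[R]_4) : Prop :=
  cr p i1 * cr v i1 + cr p i2 * cr v i2 + cr p i3 * cr v i3 = 0.

Definition dpullback_eq (a : oneform) (p : 'rV[R]_4) : Prop :=
  forall u v, tangent p u -> tangent p v -> dform a p u v = omega p u v.

Definition contact_at (a : oneform) (p : 'rV[R]_4) : Prop :=
  exists u v w, [/\ tangent p u, tangent p v, tangent p w & wedge_ad a p u v w != 0].

(* Deck transformations.  Case A: (theta, x) |-> (theta + 2 pi, x).
   Case B (mapping torus of phi(x) = (x1,-x2,-x3)):
   (theta, x) |-> (theta + 2 pi, x1, -x2, -x3); its differential is flipB. *)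
Definition e0 : 'rV[R]_4 := delta_mx 0 i0.
Definition flipB (v : 'rV[R]_4) : 'rV[R]_4 :=
  \row_j (if (j == i2) || (j == i3) then - v ord0 j else v ord0 j).
Definition deckA (p : 'rV[R]_4) : 'rV[R]_4 := p + (2 * pi) *: e0.
Definition deckB (p : 'rV[R]_4) : 'rV[R]_4 := flipB p + (2 * pi) *: e0.

(* a 1-form on the cover descends to the quotient iff it is invariant
   under the deck transformation (pullback invariance) *)
Definition invariantA (a : oneform) : Prop :=
  forall p u, ev1 a (deckA p) u = ev1 a p u.
Definition invariantB (a : oneform) : Prop :=
  forall p u, ev1 a (deckB p) (flipB u) = ev1 a p u.

End Geometry.

From HB Require Import structures.
From mathcomp Require Import all_boot all_order all_algebra.
From mathcomp Require Import all_classical all_reals all_analysis.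
From mathcomp Require Import ring.
Set Implicit Arguments. Unset Strict Implicit. Unset Printing Implicit Defensive.
Import Order.TTheory GRing.Theory Num.Theory.
Import numFieldNormedType.Exports.
Local Open Scope ring_scope.

(* The form omega is exact on the whole of S^1 x R^3: omega = d lam with
   lam = -(x1^2 + x2^2 - 2 x3^2)/2 dtheta + x3 (x2 dx1 - x1 dx2).
   The coefficients of lam do not depend on theta and are invariant under
   (x2, x3) |-> (-x2, -x3), so lam descends to both S^1 x D^3 and the mapping
   torus of phi.  At a point x of the unit sphere, lam /\ d lam evaluated on
   d/dtheta and two of the rotation fields x * e_k (cross product) equals
   -x_l (1 + 3 x3^4) / 2 for the remaining index l, and some x_l is non-zero. *)

Lemma big_ord4 (V : nmodType) (F : 'I_4 -> V) :
  \sum_(i < 4) F i = F i0 + F i1 + F i2 + F i3.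
Proof.
rewrite !big_ord_recl big_ord0 addr0 !addrA.
by congr (_ + _ + _ + _); congr F; apply: val_inj.
Qed.

Section PolynomialFunctions.
Variable R : realType.

Definition coord (k : 'I_4) (p : 'rV[R]_4) : R := cr p k.

Lemma coord_is_linear k : linear (coord k).
Proof. by move=> a x y; rewrite /coord /cr !mxE. Qed.

HB.instance Definition _ k :=
  GRing.isLinear.Build R 'rV[R]_4 R _ (coord k) (coord_is_linear k).

Lemma continuous_coord k : continuous (coord k).
Proof. exact: (@coord_continuous R 1 4 ord0 k). Qed.

Lemma partial_coord i k p : partial i (coord k) p = (i == k)%:R.
Proof.
rewrite /partial deriveE; last exact/linear_differentiable/continuous_coord.
rewrite diff_lin /=; last exact: continuous_coord.
by rewrite /coord /cr mxE eqxx /= eq_sym.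
Qed.

Inductive poly4 :=
  | PConst of R
  | PCoord of 'I_4
  | PAdd of poly4 & poly4
  | PMul of poly4 & poly4.

Fixpoint peval (e : poly4) (p : 'rV[R]_4) : R :=
  match e with
  | PConst c => c
  | PCoord j => coord j p
  | PAdd a b => peval a p + peval b p
  | PMul a b => peval a p * peval b p
  end.

Fixpoint pderiv (i : 'I_4) (e : poly4) : poly4 :=
  match e with
  | PConst _ => PConst 0
  | PCoord j => PConst (i == j)%:R
  | PAdd a b => PAdd (pderiv i a) (pderiv i b)
  | PMul a b => PAdd (PMul a (pderiv i b)) (PMul b (pderiv i a))
  end.

Lemma differentiable_peval e p : differentiable (peval e) p.
Proof.
elim: e p => [c|j|a IHa b IHb|a IHa b IHb] p /=.
- exact: differentiable_cst.
- exact: differentiable_coord.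
- exact: differentiableD.
- exact: differentiableM.
Qed.

Lemma partial_peval i e : partial i (peval e) = peval (pderiv i e).
Proof.
apply/funext => p; rewrite /partial.
have derivable_peval f v : derivable (peval f) p v.
  exact/diff_derivable/differentiable_peval.
elim: e => [c|k|a IHa b IHb|a IHa b IHb] /=.
- exact: derive_cst.
- exact: partial_coord.
- rewrite (_ : (fun q => _) = peval a + peval b) //.
  by rewrite deriveD ?IHa ?IHb.
- rewrite (_ : (fun q => _) = peval a * peval b) //.
  by rewrite deriveM ?IHa ?IHb.
Qed.

Lemma smooth_peval e : smooth (peval e).
Proof.
move=> k; elim: k e => [|k IHk] e /=.
  by move=> p; apply/differentiable_continuous/differentiable_peval.
by split=> [|i]; [exact: differentiable_peval | rewrite partial_peval].
Qed.

End PolynomialFunctions.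

Arguments PConst {R}.
Arguments PCoord {R}.

Section PrimitiveOfOmega.
Variable R : realType.

Local Infix "+P" := PAdd (at level 50, left associativity).
Local Infix "*P" := PMul (at level 40, left associativity).
Local Notation X1 := (PCoord i1).
Local Notation X2 := (PCoord i2).
Local Notation X3 := (PCoord i3).

Definition lam_coef (i : 'I_4) : poly4 R :=
  match nat_of_ord i with
  | 0 => PConst (- 2^-1) *P (X1 *P X1 +P X2 *P X2 +P PConst (-2) *P X3 *P X3)
  | 1 => X2 *P X3
  | 2 => PConst (-1) *P X1 *P X3
  | _ => PConst 0
  end.

Definition lam : oneform R := fun i => peval (lam_coef i).

Lemma smooth_lam : smooth_form lam.
Proof. by move=> i; apply: smooth_peval. Qed.

Lemma dform_lam p u v : dform lam p u v = omega p u v.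
Proof. by rewrite /dform !big_ord4 /lam !partial_peval /= /coord /omega; field. Qed.

Lemma cr_deckA (p : 'rV[R]_4) j :
  cr (deckA p) j = cr p j + (j == i0)%:R * (2 * pi).
Proof. by rewrite /cr /deckA /e0 !mxE eqxx mulrC. Qed.

Lemma cr_flipB (v : 'rV[R]_4) j :
  cr (flipB v) j = if (j == i2) || (j == i3) then - cr v j else cr v j.
Proof. by rewrite /cr mxE. Qed.

Lemma cr_deckB (p : 'rV[R]_4) j :
  cr (deckB p) j = cr (flipB p) j + (j == i0)%:R * (2 * pi).
Proof.
by rewrite /cr /deckB /e0 [in LHS]mxE; congr (_ + _); rewrite !mxE eqxx mulrC.
Qed.

Lemma invariantA_lam : invariantA lam.
Proof. by move=> p u; rewrite /ev1 !big_ord4 /lam /= /coord !cr_deckA /=; ring. Qed.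

Lemma invariantB_lam : invariantB lam.
Proof.
move=> p u; rewrite /ev1 !big_ord4 /lam /= /coord !cr_deckB !cr_flipB /=.
by ring.
Qed.

End PrimitiveOfOmega.

Section Contact.
Variable R : realType.
Implicit Types p : 'rV[R]_4.

Definition spatial (a b c : R) : 'rV[R]_4 := \row_j nth 0 [:: 0; a; b; c] j.

Definition rot1 p := spatial 0 (cr p i3) (- cr p i2).
Definition rot2 p := spatial (- cr p i3) 0 (cr p i1).
Definition rot3 p := spatial (cr p i2) (- cr p i1) 0.

Lemma cr_spatial a b c j : cr (spatial a b c) j = nth 0 [:: 0; a; b; c] j.
Proof. by rewrite /cr mxE. Qed.

Lemma tangent_e0 p : tangent p (e0 R).
Proof. by rewrite /tangent /cr /e0 !mxE /=; ring. Qed.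

Lemma tangent_rot p :
  [/\ tangent p (rot1 p), tangent p (rot2 p) & tangent p (rot3 p)].
Proof. by split; rewrite /tangent !cr_spatial /=; ring. Qed.

Definition lam_density p : R :=
  (cr p i1 ^+ 2 + cr p i2 ^+ 2 - 2 * cr p i3 ^+ 2) ^+ 2
  + 6 * cr p i3 ^+ 2 * (cr p i1 ^+ 2 + cr p i2 ^+ 2).

Lemma wedge_lam_rot p :
  [/\ wedge_ad (@lam R) p (e0 R) (rot2 p) (rot3 p) = - cr p i1 * lam_density p / 2,
      wedge_ad (@lam R) p (e0 R) (rot3 p) (rot1 p) = - cr p i2 * lam_density p / 2 &
      wedge_ad (@lam R) p (e0 R) (rot1 p) (rot2 p) = - cr p i3 * lam_density p / 2].
Proof.
by split; rewrite /wedge_ad !dform_lam /omega /ev1 !big_ord4 /lam /= /coord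
  /lam_density /rot1 /rot2 /rot3 /e0 /spatial /cr !mxE /=; field.
Qed.

Lemma lam_density_gt0 p : on_bdry p -> 0 < lam_density p.
Proof.
move=> bdry_p; have -> : lam_density p = 1 + 3 * (cr p i3 ^+ 2) ^+ 2
    + (cr p i1 ^+ 2 + cr p i2 ^+ 2 + cr p i3 ^+ 2 - 1)
      * (cr p i1 ^+ 2 + cr p i2 ^+ 2 + cr p i3 ^+ 2 + 1).
  by rewrite /lam_density; ring.
by rewrite bdry_p subrr mul0r addr0 ltr_pwDl // mulr_ge0 // sqr_ge0.
Qed.

Lemma contact_lam p : on_bdry p -> contact_at (@lam R) p.
Proof.
move=> bdry_p; have density_gt0 := lam_density_gt0 bdry_p.
have wedge_neq0 (x : R) : x != 0 -> - x * lam_density p / 2 != 0.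
  move=> x_neq0.
  by rewrite !mulf_neq0 ?oppr_eq0 ?invr_eq0 ?pnatr_eq0 ?(gt_eqF density_gt0).
have [T1 T2 T3] := tangent_rot p; have [W1 W2 W3] := wedge_lam_rot p.
have [x1_eq0|x1_neq0] := eqVneq (cr p i1) 0; last first.
  exists (e0 R), (rot2 p), (rot3 p).
  by split; [exact: tangent_e0 | | | rewrite W1 wedge_neq0].
have [x2_eq0|x2_neq0] := eqVneq (cr p i2) 0; last first.
  exists (e0 R), (rot3 p), (rot1 p).
  by split; [exact: tangent_e0 | | | rewrite W2 wedge_neq0].
have [x3_eq0|x3_neq0] := eqVneq (cr p i3) 0; last first.
  exists (e0 R), (rot1 p), (rot2 p).
  by split; [exact: tangent_e0 | | | rewrite W3 wedge_neq0].
by move: bdry_p; rewrite /on_bdry x1_eq0 x2_eq0 x3_eq0 expr0n !addr0 => /esym/eqP;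
  rewrite oner_eq0.
Qed.

End Contact.

Theorem mainTheorem7 (R : realType) :
  (exists lamA : oneform R,
     [/\ smooth_form lamA, invariantA lamA &
         forall p, on_bdry p -> dpullback_eq lamA p /\ contact_at lamA p]) /\
  (exists lamB : oneform R,
     [/\ smooth_form lamB, invariantB lamB &
         forall p, on_bdry p -> dpullback_eq lamB p /\ contact_at lamB p]).
Proof.
have bdry_lam p : on_bdry p -> dpullback_eq (@lam R) p /\ contact_at (@lam R) p.
  by move=> bdry_p; split; [move=> u v _ _; exact: dform_lam | exact: contact_lam].
split; exists (@lam R); split=> //; [exact: smooth_lam | exact: invariantA_lam
                                    | exact: smooth_lam | exact: invariantB_lam].
Qed.
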